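(* Let $n\ge 2$ be an integer and $g=3n+2$, and let $G=\{\ell_1<\dots<\ell_g\}$ be a pure $(2n+1)$-sparse gapset of genus $g$. Then there is a unique $\alpha\in[1,g-1]$ such that $\ell_{\alpha+1}-\ell_\alpha=2n+1$.
   Context: A gapset is a finite set $G\subset\mathbb{N}=\{1,2,\dots\}$ such that whenever $z\in G$ and $z=x+y$ with $x,y\in\mathbb{N}$, then $x\in G$ or $y\in G$; its genus is $g=\#G$. $G$ is pure $\kappa$-sparse if $\ell_{i+1}-\ell_i\le\kappa$ for all $i$ with equality for some $i$. *)

From mathcomp Require Import all_boot.
Set Implicit Arguments. Unset Strict Implicit. Unset Printing Implicit Defensive.

(* A finite set G of positive integers is represented by the strictly
   increasing sequence [:: l_1; ...; l_g] of its elements. *)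

Definition is_gapset (G : seq nat) : Prop :=
  [/\ sorted ltn G,
      all (fun z => 0 < z) G &
      forall z x y, z \in G -> 0 < x -> 0 < y -> z = x + y ->
        (x \in G) \/ (y \in G)].

Definition genus (G : seq nat) : nat := size G.

(* l_i, 1-indexed: ell G i = l_i for 1 <= i <= genus G *)
Definition ell (G : seq nat) (i : nat) : nat := nth 0 G i.-1.

Definition pure_sparse (kappa : nat) (G : seq nat) : Prop :=
  (forall i, 1 <= i -> i < genus G -> ell G i.+1 - ell G i <= kappa) /\
  (exists i, [/\ 1 <= i, i < genus G & ell G i.+1 - ell G i = kappa]).

(** Let two consecutive elements of [G] be [a < a + d] and later [b < b + d].
    Each of the [d - 1] gaps [x] strictly between [a] and [a + d] splits every
    larger element [z] of [G] as [x + (z - x)], so [z - x] lies in [G].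
    Taking [z = a + d] puts [1, ..., d - 1] in [G]; taking [z = b + d] puts
    [b - a + 1, ..., b - a + d - 1] in [G]; together with [b + d] these are
    [2d - 1] distinct elements.  For [d = 2n + 1] this gives [4n + 1] elements,
    more than the genus [3n + 2] as soon as [n >= 2]. *)

From mathcomp Require Import all_boot.
From mathcomp Require Import zify.

Lemma ltn_nth_sorted (s : seq nat) i j : sorted ltn s ->
  i < size s -> j < size s -> (nth 0 s i < nth 0 s j) = (i < j).
Proof.
move=> s_sorted i_lt j_lt.
have mono := sorted_ltn_nth ltn_trans 0 s_sorted.
case: (ltngtP i j) => [ij | ji | ->]; last exact: ltnn.
- exact: mono.
- by apply/negbTE; rewrite -leqNgt ltnW // mono.
Qed.

Section Gapset.

Variable G : seq nat.
Hypothesis G_gapset : is_gapset G.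

Let G_sorted : sorted ltn G. Proof. by case: G_gapset. Qed.

Lemma mem_ell k : 1 <= k <= size G -> ell G k \in G.
Proof. by case/andP=> k_gt0 k_le; rewrite /ell mem_nth // prednK. Qed.

Lemma ltn_ell i j : 1 <= i <= size G -> 1 <= j <= size G ->
  (ell G i < ell G j) = (i < j).
Proof.
case/andP=> i_gt0 i_le /andP [j_gt0 j_le].
rewrite /ell ltn_nth_sorted //; lia.
Qed.

Lemma leq_ell i j : 1 <= i <= size G -> 1 <= j <= size G ->
  (ell G i <= ell G j) = (i <= j).
Proof. by move=> i_range j_range; rewrite leqNgt ltn_ell // -leqNgt. Qed.

Lemma notin_between_ell k x : 1 <= k < size G ->
  ell G k < x < ell G k.+1 -> x \notin G.
Proof.
move=> k_range /andP [lo hi]; apply/negP => /(nthP 0) [j j_lt x_def].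
have x_ell : x = ell G j.+1 by rewrite /ell.
have j_range : 1 <= j.+1 <= size G by [].
rewrite x_ell !ltn_ell // in lo hi; lia.
Qed.

Lemma gapset_subn_mem z x : z \in G -> 0 < x < z -> x \notin G -> z - x \in G.
Proof.
case: G_gapset => _ _ split_mem zG /andP [x_gt0 x_lt] xG.
have [zx_gt0 z_split] : 0 < z - x /\ z = x + (z - x) by lia.
have [xG'|//] := split_mem z x (z - x) zG x_gt0 zx_gt0 z_split.
by rewrite xG' in xG.
Qed.

Lemma genus_two_gaps a b d : a + d \in G -> b + d \in G -> a + d <= b ->
  (forall x, a < x < a + d -> x \notin G) -> 2 * d.-1 < genus G.
Proof.
move=> ad_mem bd_mem ad_le_b gap.
have reflect_gap z x : z \in G -> a < x < a + d -> x < z -> z - x \in G.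
  by move=> zG x_gap x_lt; apply: gapset_subn_mem (gap x x_gap) => //; lia.
have low_mem i : 0 < i < d -> i \in G.
  move=> i_range; have -> : i = a + d - (a + d - i) by lia.
  by apply: reflect_gap ad_mem _ _; lia.
have mid_mem i : b - a < i < b - a + d -> i \in G.
  move=> i_range; have -> : i = b + d - (b + d - i) by lia.
  by apply: reflect_gap bd_mem _ _; lia.
pose s := iota 1 d.-1 ++ iota (b - a).+1 d.-1 ++ [:: b + d].
have s_uniq : uniq s.
  rewrite /s !cat_uniq !iota_uniq /= !andbT mem_iota; apply/andP; split; last lia.
  by apply/hasPn => x; rewrite mem_cat !inE !mem_iota; lia.
have s_sub : {subset s <= G}.
  move=> x; rewrite !mem_cat !inE !mem_iota => /or3P [x_low | x_mid | /eqP ->] //.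
  - by apply: low_mem; lia.
  - by apply: mid_mem; lia.
have := uniq_leq_size s_uniq s_sub.
by rewrite /genus /s !size_cat !size_iota /=; lia.
Qed.

Lemma genus_two_jumps al be d : 1 <= al -> al < be < size G ->
  ell G al.+1 - ell G al = d -> ell G be.+1 - ell G be = d ->
  2 * d.-1 < genus G.
Proof.
move=> al_gt0 /andP [al_be be_lt] jump_al jump_be.
have al_range : 1 <= al < size G by rewrite al_gt0 (ltn_trans al_be).
have step_al : ell G al < ell G al.+1 by rewrite ltn_ell //; lia.
have step_be : ell G be < ell G be.+1 by rewrite ltn_ell //; lia.
have top_al : ell G al + d = ell G al.+1 by rewrite -jump_al subnKC // ltnW.
have top_be : ell G be + d = ell G be.+1 by rewrite -jump_be subnKC // ltnW.
apply: (@genus_two_gaps (ell G al) (ell G be)); rewrite ?top_al ?top_be.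
- by apply: mem_ell; lia.
- by apply: mem_ell; lia.
- by rewrite leq_ell //; lia.
- by move=> x; apply: notin_between_ell.
Qed.

End Gapset.

Theorem mainTheorem19 (n : nat) (G : seq nat) :
  2 <= n ->
  is_gapset G ->
  genus G = 3 * n + 2 ->
  pure_sparse (2 * n + 1) G ->
  exists! alpha : nat,
    (1 <= alpha <= genus G - 1) /\ ell G alpha.+1 - ell G alpha = 2 * n + 1.
Proof.
move=> n_ge2 G_gapset G_genus [_ [al [al_gt0 al_lt jump_al]]].
have no_two_jumps i j : 1 <= i -> i < j -> j < genus G ->
    ell G i.+1 - ell G i = 2 * n + 1 -> ell G j.+1 - ell G j = 2 * n + 1 -> False.
  move=> i_gt0 ij j_lt jump_i jump_j.
  have ij_range : i < j < size G by rewrite ij.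
  have := @genus_two_jumps G G_gapset i j _ i_gt0 ij_range jump_i jump_j.
  by rewrite G_genus; lia.
exists al; split; first by split => //; lia.
move=> be [/andP [be_gt0 be_le] jump_be].
case: (ltngtP al be) => [al_be | be_al | //]; exfalso.
- by apply: (no_two_jumps al be) => //; lia.
- exact: (no_two_jumps be al).
Qed.
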